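(* Let $n=2^k$ for an integer $k\ge1$ and $\omega_n=e^{2\pi i/n}$. Define $$A_{n}=\{\Re(\omega_n^t):t\in\mathbb{Z},\ 0\le t<2^{k-2}\},\qquad B_{n}=\{i\,\Im(\omega_n^t):t\in\mathbb{Z},\ 0<t\le 2^{k-2}\}.$$ Then $A_n\cup B_n$ is a basis for $\mathbb{Q}(\omega_n)$ over $\mathbb{Q}$. Moreover, for every integer $t$, all coordinates of $\Re(\omega_n^t)$ and of $i\,\Im(\omega_n^t)$ with respect to this basis lie in $\{-1,0,1\}$.
   Context: $\Re$ and $\Im$ denote real and imaginary parts. *)

From mathcomp Require Import all_boot all_order all_algebra.
From mathcomp Require Import reals trigo.
From mathcomp.real_closed Require Import complex.
Import Order.TTheory GRing.Theory Num.Theory.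

Set Implicit Arguments.
Unset Strict Implicit.
Unset Printing Implicit Defensive.

Local Open Scope ring_scope.
Local Open Scope complex_scope.

Definition omega (R : realType) (n : nat) : R[i] :=
  (cos (2 * pi / n%:R)) +i* (sin (2 * pi / n%:R)).

(* Index sets: A uses 0 <= t < 2^(k-2), i.e. 4t < 2^k;
               B uses 0 < t <= 2^(k-2), i.e. 4t <= 2^k (t > 0). *)
Definition Aidx (k : nat) : seq nat := [seq t <- iota 0 (2 ^ k) | 4 * t < 2 ^ k]%N.
Definition Bidx (k : nat) : seq nat := [seq t <- iota 1 (2 ^ k) | 4 * t <= 2 ^ k]%N.

Definition basis_seq (R : realType) (k : nat) : seq R[i] :=
  [seq 'Re (omega R (2 ^ k) ^+ t) | t <- Aidx k] ++
  [seq 'i * 'Im (omega R (2 ^ k) ^+ t) | t <- Bidx k].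

(* Subfields of a field, and the subfield Q(a) generated by a (the
   intersection of all subfields containing a; every subfield contains Q). *)
Definition is_subfield (F : fieldType) (S : F -> Prop) : Prop :=
  [/\ S 0, S 1,
      (forall x y, S x -> S y -> S (x - y)),
      (forall x y, S x -> S y -> S (x * y)) &
      (forall x, S x -> x != 0 -> S x^-1)].

Definition Qadjoin (F : fieldType) (a : F) : F -> Prop :=
  fun z => forall S : F -> Prop, is_subfield S -> S a -> S z.

Definition Qcomb (F : fieldType) (s : seq F) (c : 'I_(size s) -> rat) : F :=
  \sum_(j < size s) ratr (c j) * s`_j.

Definition is_Qbasis (F : fieldType) (K : F -> Prop) (s : seq F) : Prop :=
  [/\ (forall j : 'I_(size s), K s`_j),
      (forall c : 'I_(size s) -> rat, Qcomb c = 0 -> forall j, c j = 0) &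
      (forall z, K z -> exists c : 'I_(size s) -> rat, z = Qcomb c)].

From mathcomp Require Import all_boot all_order all_algebra all_field.
From mathcomp Require Import ring zify.
From mathcomp Require Import reals trigo.
From mathcomp.real_closed Require Import complex.
Import GRing.Theory Num.Theory.

(* The primitive root w = omega_n satisfies w^(n/2) = -1, and X^(n/2) + 1 is
   irreducible over Q, so Q(w) = Q[w] has the power basis 1, w, ..., w^(n/2-1).
   Since Re(w^t) = (w^t + w^-t)/2 and i Im(w^t) = (w^t - w^-t)/2, the relation
   w^(t + n/2) = - w^t and the reflection t |-> n/2 - t show that each of these
   numbers is 0 or +- a member of A_n u B_n; this gives the coordinates in
   {-1, 0, 1}.  As w^t is the sum of the two, A_n u B_n spans Q(w), and it has
   n/2 elements, so it is a basis. *)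

Set Implicit Arguments.
Unset Strict Implicit.
Unset Printing Implicit Defensive.

Local Open Scope ring_scope.

Section Qspan.
Variables (F : numFieldType) (s : seq F).

Definition Qspan (z : F) : Prop := exists c : 'I_(size s) -> rat, z = Qcomb c.

Lemma eq_Qcomb (c1 c2 : 'I_(size s) -> rat) : c1 =1 c2 -> Qcomb c1 = Qcomb c2.
Proof. by move=> c12; apply: eq_bigr => i _; rewrite c12. Qed.

Lemma Qcomb0 : Qcomb (fun _ : 'I_(size s) => 0) = 0.
Proof. by rewrite /Qcomb big1 // => i _; rewrite rmorph0 mul0r. Qed.

Lemma QcombD (c1 c2 : 'I_(size s) -> rat) :
  Qcomb c1 + Qcomb c2 = Qcomb (fun i => c1 i + c2 i).
Proof. by rewrite /Qcomb -big_split; apply: eq_bigr => i _; rewrite rmorphD mulrDl. Qed.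

Lemma QcombB (c1 c2 : 'I_(size s) -> rat) :
  Qcomb c1 - Qcomb c2 = Qcomb (fun i => c1 i - c2 i).
Proof. by rewrite /Qcomb -sumrB; apply: eq_bigr => i _; rewrite rmorphB mulrBl. Qed.

Lemma QcombZ (q : rat) (c : 'I_(size s) -> rat) :
  ratr q * Qcomb c = Qcomb (fun i => q * c i).
Proof. by rewrite /Qcomb mulr_sumr; apply: eq_bigr => i _; rewrite rmorphM mulrA. Qed.

Lemma Qcomb_delta (i0 : 'I_(size s)) (e : rat) :
  Qcomb (fun i => if i == i0 then e else 0) = ratr e * s`_i0.
Proof.
rewrite /Qcomb (bigD1 i0) //= eqxx big1 ?addr0 // => i /negbTE ->.
by rewrite rmorph0 mul0r.
Qed.

Lemma Qspan0 : Qspan 0.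
Proof. by exists (fun _ => 0); rewrite Qcomb0. Qed.

Lemma QspanD x y : Qspan x -> Qspan y -> Qspan (x + y).
Proof. by move=> [c1 ->] [c2 ->]; exists (fun i => c1 i + c2 i); rewrite QcombD. Qed.

Lemma QspanZ q x : Qspan x -> Qspan (ratr q * x).
Proof. by move=> [c ->]; exists (fun i => q * c i); rewrite QcombZ. Qed.

Lemma Qspan_sum (I : finType) (x : I -> F) :
  (forall i, Qspan (x i)) -> Qspan (\sum_i x i).
Proof. by move=> Hx; apply: big_ind => //; [exact: Qspan0 | exact: QspanD]. Qed.

Definition signed_mem (z : F) : Prop := [\/ z = 0, z \in s | - z \in s].

Lemma signed_memN z : signed_mem z -> signed_mem (- z).
Proof.
by case=> [->|zs|Nzs]; [apply: Or31; rewrite oppr0 | apply: Or33; rewrite opprK | apply: Or32].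
Qed.

Lemma signed_mem_Qcomb z : signed_mem z ->
  exists c : 'I_(size s) -> rat, (forall i, c i \in [:: -1; 0; 1]) /\ z = Qcomb c.
Proof.
have delta_sign (x : F) (e : rat) : x \in s -> e \in [:: -1; 1] ->
    exists c : 'I_(size s) -> rat, (forall i, c i \in [:: -1; 0; 1]) /\ ratr e * x = Qcomb c.
  move=> xs e_sign; pose i0 := Ordinal (etrans (index_mem x s) xs).
  exists (fun i => if i == i0 then e else 0); rewrite Qcomb_delta nth_index //.
  split=> // i; case: (i == i0); rewrite !inE ?eqxx ?orbT //.
  by move: e_sign; rewrite !inE => /orP[] ->; rewrite ?orbT.
case=> [->|zs|Nzs].
- by exists (fun _ => 0); rewrite Qcomb0; split=> // i; rewrite !inE eqxx orbT.
- by have := delta_sign z 1 zs; rewrite rmorph1 mul1r; apply; rewrite !inE eqxx orbT.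
- have := delta_sign (- z) (-1) Nzs; rewrite rmorphN1 mulN1r opprK; apply.
  by rewrite !inE eqxx.
Qed.

End Qspan.

Lemma signed_mem_signz (F : numFieldType) (s : seq F) (q : int) z :
  signed_mem s z -> signed_mem s ((-1) ^ q * z).
Proof.
move=> sz; have sign_nat n : (-1 : F) ^+ n = 1 \/ (-1 : F) ^+ n = -1.
  by rewrite -signr_odd; case: odd; [right | left].
have [->|->] : (-1 : F) ^ q = 1 \/ (-1 : F) ^ q = -1.
  by case: q => n; rewrite ?NegzE -?exprz_inv ?invrN1 -exprnP; apply: sign_nat.
- by rewrite mul1r.
- by rewrite mulN1r; apply: signed_memN.
Qed.

Lemma Qspan_trans (F : numFieldType) (b s : seq F) z :
  (forall i : 'I_(size b), Qspan s b`_i) -> Qspan b z -> Qspan s z.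
Proof. by move=> Hb [c ->]; apply: Qspan_sum => i; apply: QspanZ. Qed.

Lemma Qcomb_mulmx (F : numFieldType) (b s : seq F) (U : 'M[rat]_(size s, size b)) :
  (forall k : 'I_(size s), s`_k = Qcomb (fun l => U k l)) ->
  forall c, Qcomb c = Qcomb (fun l => \sum_k c k * U k l).
Proof.
move=> HU c; rewrite /Qcomb; under eq_bigr do rewrite HU /Qcomb mulr_sumr.
rewrite exchange_big; apply: eq_bigr => l _; rewrite rmorph_sum mulr_suml.
by apply: eq_bigr => k _; rewrite rmorphM mulrA.
Qed.

Lemma Qspan_coord_mx (F : numFieldType) (b s : seq F) :
  (forall k : 'I_(size s), Qspan b s`_k) ->
  exists U : 'M[rat]_(size s, size b),
    forall k : 'I_(size s), s`_k = Qcomb (fun l => U k l).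
Proof.
move=> s_in_b; have [f Hf] := fin_all_exists s_in_b.
by exists (\matrix_(k, l) f k l) => k; rewrite Hf; apply: eq_Qcomb => l; rewrite mxE.
Qed.

Lemma Qcomb_inj (F : numFieldType) (s : seq F) :
  (forall c : 'I_(size s) -> rat, Qcomb c = 0 -> forall i, c i = 0) ->
  forall c1 c2 : 'I_(size s) -> rat, Qcomb c1 = Qcomb c2 -> c1 =1 c2.
Proof.
move=> s_free c1 c2 /eqP; rewrite -subr_eq0 QcombB => /eqP /s_free c12 i.
by apply/eqP; rewrite -subr_eq0 (c12 i).
Qed.

Lemma Qfree_of_Qspan (F : numFieldType) (b s : seq F) :
  (size s <= size b)%N ->
  (forall c : 'I_(size b) -> rat, Qcomb c = 0 -> forall l, c l = 0) ->
  (forall k : 'I_(size s), Qspan b s`_k) ->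
  (forall l : 'I_(size b), Qspan s b`_l) ->
  forall c : 'I_(size s) -> rat, Qcomb c = 0 -> forall k, c k = 0.
Proof.
move=> size_sb /Qcomb_inj b_inj /Qspan_coord_mx[U HU] /Qspan_coord_mx[N HN] c c0.
have NU1 : N *m U = 1%:M.
  apply/matrixP => l l'; apply: (b_inj (fun l' => (N *m U) l l') (fun l' => 1%:M l l')).
  rewrite (eq_Qcomb (c2 := fun l' => \sum_k N l k * U k l')); last by move=> l''; rewrite mxE.
  rewrite -(Qcomb_mulmx HU) -HN -[b`_l]mul1r -(rmorph1 ratr) -Qcomb_delta.
  by apply: eq_Qcomb => l''; rewrite mxE eq_sym; case: (l == l'').
have U_free : row_free U.
  rewrite /row_free eqn_leq rank_leq_row (leq_trans size_sb) //.
  by rewrite -[X in (X <= _)%N](mxrank1 rat) -NU1 mxrankM_maxr.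
have /(row_free_inj U_free) cU0 : (\row_k c k) *m U = 0 *m U.
  apply/rowP => l; rewrite mul0mx [RHS]mxE.
  apply: (b_inj (fun l => ((\row_k c k) *m U) 0 l) (fun _ => 0)).
  rewrite Qcomb0 -c0 (Qcomb_mulmx HU); apply: eq_Qcomb => l'.
  by rewrite mxE; apply: eq_bigr => k _; rewrite mxE.
by move=> k; have := congr1 (fun v : 'rV_(size s) => v 0 k) cU0; rewrite !mxE.
Qed.

Section Subfield.
Variables (F : fieldType) (K : F -> Prop).
Hypothesis K_subfield : is_subfield K.

Lemma subfield0 : K 0. Proof. by case: K_subfield. Qed.
Lemma subfield1 : K 1. Proof. by case: K_subfield. Qed.

Lemma subfieldB x y : K x -> K y -> K (x - y).
Proof. by case: K_subfield => _ _ KB _ _; apply: KB. Qed.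

Lemma subfieldM x y : K x -> K y -> K (x * y).
Proof. by case: K_subfield => _ _ _ KM _; apply: KM. Qed.

Lemma subfieldV x : K x -> K x^-1.
Proof.
case: (eqVneq x 0) => [-> _|x0 Kx]; first by rewrite invr0; apply: subfield0.
by case: K_subfield => _ _ _ _ KV; apply: KV.
Qed.

Lemma subfieldN x : K x -> K (- x).
Proof. by rewrite -sub0r; apply: subfieldB; apply: subfield0. Qed.

Lemma subfieldD x y : K x -> K y -> K (x + y).
Proof. by move=> Kx Ky; rewrite -[y]opprK; apply: subfieldB (subfieldN Ky). Qed.

Lemma subfield_half x : K x -> K (x / 2).
Proof. by move=> Kx; apply/subfieldM/subfieldV/subfieldD => //; apply: subfield1. Qed.

Lemma subfieldXz x (t : int) : K x -> K (x ^ t).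
Proof.
have KX n : K x -> K (x ^+ n).
  move=> Kx; elim: n => [|n IHn]; first by rewrite expr0; apply: subfield1.
  by rewrite exprS; apply: subfieldM.
by case: t => n Kx; last apply: subfieldV; apply: KX.
Qed.

End Subfield.

Definition Qpoly_at (F : numFieldType) (w z : F) : Prop :=
  exists p : {poly rat}, z = (map_poly ratr p).[w].

Section IrreducibleRoot.
Variables (F : numFieldType) (w : F) (P : {poly rat}).
Hypotheses (P_irr : irreducible_poly P) (P_root : root (map_poly ratr P) w).

Lemma dvdp_of_root (p : {poly rat}) : root (map_poly ratr p) w -> P %| p.
Proof.
move=> p_root; apply: contraT; rewrite -irreducible_poly_coprime //.
move=> /Bezout_eq1_coprimepP [[u v] /= Buv].
have := congr1 (fun q => (map_poly (ratr : rat -> F) q).[w]) Buv.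
rewrite /= rmorphD !rmorphM hornerD !hornerM (rootP P_root) (rootP p_root).
by rewrite rmorph1 hornerC !mulr0 addr0 => /eqP; rewrite eq_sym oner_eq0.
Qed.

Lemma horner_modp (p : {poly rat}) :
  (map_poly ratr (p %% P)).[w] = (map_poly ratr p).[w] :> F.
Proof.
rewrite [in RHS](divp_eq p P) rmorphD rmorphM hornerD hornerM (rootP P_root).
by rewrite mulr0 add0r.
Qed.

Lemma Qpoly_at_id : Qpoly_at w w.
Proof. by exists 'X; rewrite map_polyX hornerX. Qed.

Lemma Qpoly_at_subfield : is_subfield (Qpoly_at w).
Proof.
split.
- by exists 0; rewrite rmorph0 horner0.
- by exists 1; rewrite rmorph1 hornerC.
- by move=> _ _ [p ->] [q ->]; exists (p - q); rewrite rmorphB hornerD hornerN.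
- by move=> _ _ [p ->] [q ->]; exists (p * q); rewrite rmorphM hornerM.
move=> _ [p ->] pw0.
have : coprimep P p.
  rewrite irreducible_poly_coprime //; apply: contra pw0 => Pp.
  by apply: (root_dvdp _ P_root); rewrite dvdp_map.
move=> /Bezout_eq1_coprimepP [[u v] /= Buv]; exists v.
have := congr1 (fun q => (map_poly (ratr : rat -> F) q).[w]) Buv.
rewrite /= rmorphD !rmorphM hornerD !hornerM (rootP P_root) mulr0 add0r.
by rewrite rmorph1 hornerC => vp1; rewrite -[LHS]mul1r -vp1 mulfK.
Qed.

Definition power_basis : seq F := mkseq (fun i => w ^+ i) (size P).-1.

Lemma size_power_basis : size power_basis = (size P).-1.
Proof. exact: size_mkseq. Qed.

Lemma nth_power_basis (i : 'I_(size power_basis)) : power_basis`_i = w ^+ i.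
Proof. by rewrite nth_mkseq -?size_power_basis. Qed.

Lemma Qcomb_power_basis (q : {poly rat}) : (size q <= (size P).-1)%N ->
  Qcomb (fun i : 'I_(size power_basis) => q`_i) = (map_poly ratr q).[w].
Proof.
move=> size_q; rewrite (@horner_coef_wide _ (size power_basis)); last first.
  by rewrite size_map_poly size_power_basis.
by apply: eq_bigr => i _; rewrite coef_map nth_mkseq // -size_power_basis.
Qed.

Lemma power_basis_free (c : 'I_(size power_basis) -> rat) :
  Qcomb c = 0 -> forall i, c i = 0.
Proof.
pose q := \poly_(i < size power_basis) odflt 0 (omap c (insub i)).
have cq : c =1 fun i => q`_i by move=> i; rewrite coef_poly ltn_ord valK.
have size_q : (size q <= (size P).-1)%N by rewrite -size_power_basis size_poly.
move=> c0; have q_root : root (map_poly ratr q) w.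
  by rewrite /root -Qcomb_power_basis // -(eq_Qcomb cq) c0.
suff q0 : q = 0 by move=> i; rewrite cq q0 coef0.
apply/eqP; apply: contraT => q0; have := dvdp_leq q0 (dvdp_of_root q_root).
by rewrite leqNgt (leq_ltn_trans size_q) // prednK // size_poly_gt0 irredp_neq0.
Qed.

Lemma Qspan_power_basis z : Qpoly_at w z -> Qspan power_basis z.
Proof.
move=> [p ->]; exists (fun i => (p %% P)`_i); rewrite Qcomb_power_basis ?horner_modp //.
by rewrite -ltnS prednK ?ltn_modp ?irredp_neq0 // size_poly_gt0 irredp_neq0.
Qed.

End IrreducibleRoot.

Definition Phi2 (j : nat) : {poly rat} := 'X^(2 ^ j) + 1.

Lemma size_Phi2 j : size (Phi2 j) = (2 ^ j).+1.
Proof. by rewrite size_addl ?size_polyXn // size_polyC oner_eq0 ltnS expn_gt0. Qed.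

Lemma root_Phi2 (F : numFieldType) j (w : F) :
  root (map_poly ratr (Phi2 j)) w = (w ^+ (2 ^ j) == -1).
Proof. by rewrite /root rmorphD /= map_polyXn rmorph1 hornerD hornerXn hornerC addr_eq0. Qed.

(* A complex primitive 2^(j+1)-th root of unity is a root of [Phi2 j], and its
   minimal polynomial is cyclotomic of degree totient (2^(j+1)) = 2^j. *)
Lemma Phi2_irreducible j : irreducible_poly (Phi2 j).
Proof.
have [z z_prim] := C_prim_root_exists (expn_gt0 2 j.+1).
have z_root : root (map_poly ratr (Phi2 j)) z.
  have : z ^+ (2 ^ j) ^+ 2 == 1 by rewrite -exprM -expnSr prim_expr_order.
  rewrite root_Phi2 sqrf_eq1 => /orP[/eqP zj1|//].
  by have := prim_order_dvd z_prim (2 ^ j); rewrite zj1 eqxx dvdn_Pexp2l // ltnn.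
have [pz [pz_min _] dvd_pz] := minCpolyP z.
have size_pz : size pz = (2 ^ j).+1.
  rewrite -(size_map_poly (ratr : {rmorphism rat -> algC})) -pz_min.
  by rewrite (minCpoly_cyclotomic z_prim) size_cyclotomic totient_pfactor // mul1n.
apply/(subfx_irreducibleP (iota := ratr : {rmorphism rat -> algC}) z_root).
  by rewrite -size_poly_eq0 size_Phi2.
by move=> q q_root q0; rewrite size_Phi2 -size_pz dvdp_leq // -dvd_pz.
Qed.

Lemma int_euclid (t : int) (n : nat) : (0 < n)%N ->
  exists (q : int) (r : nat), t = r%:Z + q * n%:Z /\ (r < n)%N.
Proof.
move=> n_gt0; have n0 : n%:Z != 0 by rewrite eqz_nat -lt0n.
exists (t %/ n%:Z)%Z, `|(t %% n%:Z)%Z|%N.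
rewrite gez0_abs ?modz_ge0 // addrC -divz_eq; split=> //.
by rewrite -ltz_nat gez0_abs ?modz_ge0 ?ltz_pmod ?ltz_nat.
Qed.

Lemma count_iota_prefix (P : pred nat) (a b m : nat) : (a <= m)%N ->
  {in iota b m, forall t, P t = (t < b + a)%N} -> count P (iota b m) = a.
Proof.
move=> le_am HP; rewrite (eq_in_count HP) -(subnKC le_am) iotaD count_cat.
rewrite (@eq_in_count _ _ predT (iota b a)); last first.
  by move=> t; rewrite mem_iota => /andP[_ ->].
rewrite (@eq_in_count _ _ pred0 (iota (b + a) (m - a))); last first.
  by move=> t; rewrite mem_iota => /andP[le_t _] /=; rewrite ltnNge le_t.
by rewrite count_predT count_pred0 size_iota addn0.
Qed.

Lemma size_Aidx_add_Bidx j : (size (Aidx j.+1) + size (Bidx j.+1))%N = (2 ^ j)%N.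
Proof.
case: j => [//|j]; rewrite /Aidx /Bidx !size_filter !expnS mulnA.
set m := (2 ^ j)%N.
by rewrite (@count_iota_prefix _ m) ?(@count_iota_prefix _ m); try move=> t _ /=; lia.
Qed.

Section RootOfMinusOne.
Variables (C : numClosedFieldType) (j : nat) (w : C).
Hypotheses (w_half : w ^+ (2 ^ j) = -1) (w_conj : w^* = w^-1).

Local Notation n := (2 ^ j)%N.

Lemma w_unit : w \is a GRing.unit.
Proof.
rewrite unitfE; apply: contra_eqN w_half => /eqP->.
by rewrite expr0n expn_eq0 /= eq_sym oppr_eq0 oner_eq0.
Qed.

Lemma pow_shift (t q : int) : w ^ (t + q * n%:Z) = (-1) ^ q * w ^ t.
Proof. by rewrite exprzDr ?w_unit // [q * _]mulrC -exprz_exp -exprnP w_half mulrC. Qed.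

Lemma pow_shiftN (t q : int) : w ^ (- (t + q * n%:Z)) = (-1) ^ q * w ^ (- t).
Proof. by rewrite opprD -mulNr pow_shift -[(-1) ^ (- q)]exprz_inv invrN1. Qed.

Definition cos_part (t : int) : C := (w ^ t + w ^ (- t)) / 2.
Definition isin_part (t : int) : C := (w ^ t - w ^ (- t)) / 2.

Lemma cos_part_shift (t q : int) : cos_part (t + q * n%:Z) = (-1) ^ q * cos_part t.
Proof. by rewrite /cos_part pow_shift pow_shiftN -mulrDr mulrA. Qed.

Lemma isin_part_shift (t q : int) : isin_part (t + q * n%:Z) = (-1) ^ q * isin_part t.
Proof. by rewrite /isin_part pow_shift pow_shiftN -mulrBr mulrA. Qed.

Lemma cos_part_reflect (t : int) : cos_part (n%:Z - t) = - cos_part t.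
Proof.
rewrite -[n%:Z - t]addrC -[n%:Z]mul1r cos_part_shift /cos_part opprK.
by rewrite expr1z mulN1r addrC.
Qed.

Lemma isin_part_reflect (t : int) : isin_part (n%:Z - t) = isin_part t.
Proof.
rewrite -[n%:Z - t]addrC -[n%:Z]mul1r isin_part_shift /isin_part opprK.
by rewrite expr1z mulN1r -mulNr opprB.
Qed.

Lemma cos_part_add_isin_part (t : int) : cos_part t + isin_part t = w ^ t.
Proof. by rewrite /cos_part /isin_part; field. Qed.

Lemma Re_pow (t : int) : 'Re (w ^ t) = cos_part t.
Proof.
rewrite ReE /cos_part; congr ((_ + _) / _).
by rewrite (rmorphXz (Num.conj_op : {rmorphism C -> C})) ?w_unit //= w_conj exprz_inv.
Qed.

Lemma Im_pow (t : int) : 'i * 'Im (w ^ t) = isin_part t.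
Proof.
apply: (addrI (cos_part t)); rewrite cos_part_add_isin_part -Re_pow.
exact/esym/Crect.
Qed.

Definition re_im_basis : seq C :=
  [seq 'Re (w ^+ t) | t <- Aidx j.+1] ++ [seq 'i * 'Im (w ^+ t) | t <- Bidx j.+1].

Lemma size_re_im_basis : size re_im_basis = n.
Proof. by rewrite size_cat !size_map size_Aidx_add_Bidx. Qed.

Lemma cos_part_mem (t : nat) : (2 * t < n)%N -> cos_part t \in re_im_basis.
Proof.
move=> t_lt; rewrite -Re_pow -exprnP mem_cat (map_f (fun t => 'Re (w ^+ t))) //.
by rewrite mem_filter mem_iota expnS; move: t_lt; set m := n; lia.
Qed.

Lemma isin_part_mem (t : nat) : (0 < t)%N -> (2 * t <= n)%N -> isin_part t \in re_im_basis.
Proof.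
move=> t_gt0 t_le; rewrite -Im_pow -exprnP mem_cat orbC.
rewrite (map_f (fun t => 'i * 'Im (w ^+ t))) //.
by rewrite mem_filter mem_iota expnS; move: t_le; set m := n; lia.
Qed.

Lemma re_im_basisP x :
  x \in re_im_basis -> exists t : int, x = cos_part t \/ x = isin_part t.
Proof.
rewrite mem_cat => /orP[] /mapP[t _ ->]; exists t.
  by left; rewrite -Re_pow.
by right; rewrite -Im_pow.
Qed.

Lemma signed_mem_cos_part (t : int) : signed_mem re_im_basis (cos_part t).
Proof.
have [q [r [-> r_lt]]] := int_euclid t (expn_gt0 2 j).
rewrite cos_part_shift; apply: signed_mem_signz.
case: (ltngtP (2 * r) n) => r2.
- exact/Or32/cos_part_mem.
- apply: Or33; rewrite -cos_part_reflect subzn ?(ltnW r_lt) //.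
  by apply: cos_part_mem; move: r2 r_lt; set m := n; lia.
- apply: Or31; have := cos_part_reflect r.
  rewrite (_ : n%:Z - r%:Z = r%:Z) => [/eqP|]; last by rewrite -r2; lia.
  by rewrite -subr_eq0 opprK -mulr2n mulrn_eq0 => /eqP.
Qed.

Lemma signed_mem_isin_part (t : int) : signed_mem re_im_basis (isin_part t).
Proof.
have [q [r [-> r_lt]]] := int_euclid t (expn_gt0 2 j).
rewrite isin_part_shift; apply: signed_mem_signz.
case: (posnP r) => [->|r_gt0]; first by apply: Or31; rewrite /isin_part subrr mul0r.
case: (leqP (2 * r) n) => r2; first exact/Or32/isin_part_mem.
apply: Or32; rewrite -isin_part_reflect subzn ?(ltnW r_lt) //.
by apply: isin_part_mem; move: r2 r_lt; set m := n; lia.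
Qed.

Lemma Qspan_pow (t : int) : Qspan re_im_basis (w ^ t).
Proof.
rewrite -cos_part_add_isin_part; apply: QspanD.
  by have /signed_mem_Qcomb[c [_ ->]] := signed_mem_cos_part t; exists c.
by have /signed_mem_Qcomb[c [_ ->]] := signed_mem_isin_part t; exists c.
Qed.

Lemma re_im_basis_subfield (K : C -> Prop) : is_subfield K -> K w ->
  forall k : 'I_(size re_im_basis), K re_im_basis`_k.
Proof.
move=> K_sub Kw k; have /re_im_basisP[t [->| ->]] := mem_nth 0 (ltn_ord k).
  by apply/(subfield_half K_sub)/(subfieldD K_sub); apply: subfieldXz.
by apply/(subfield_half K_sub)/(subfieldB K_sub); apply: subfieldXz.
Qed.

Lemma re_im_basis_Qbasis : is_Qbasis (Qadjoin w) re_im_basis.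
Proof.
have Phi2_irr := Phi2_irreducible j.
have Phi2_root : root (map_poly ratr (Phi2 j)) w by rewrite root_Phi2 w_half.
have w_sub := Qpoly_at_subfield Phi2_irr Phi2_root.
split.
- by move=> k K K_sub Kw; apply: re_im_basis_subfield.
- apply: (Qfree_of_Qspan (b := power_basis w (Phi2 j))).
  + by rewrite size_re_im_basis size_power_basis size_Phi2.
  + exact: power_basis_free.
  + move=> k; apply: Qspan_power_basis => //.
    by apply: re_im_basis_subfield => //; apply: Qpoly_at_id.
  + by move=> l; rewrite nth_power_basis exprnP; apply: Qspan_pow.
- move=> z /(_ _ w_sub (Qpoly_at_id w)) /(Qspan_power_basis Phi2_irr Phi2_root).
  by apply: Qspan_trans => l; rewrite nth_power_basis exprnP; apply: Qspan_pow.
Qed.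

Lemma re_im_coords (t : int) :
  (exists c : 'I_(size re_im_basis) -> rat,
     (forall i, c i \in [:: -1; 0; 1]) /\ 'Re (w ^ t) = Qcomb c) /\
  (exists c : 'I_(size re_im_basis) -> rat,
     (forall i, c i \in [:: -1; 0; 1]) /\ 'i * 'Im (w ^ t) = Qcomb c).
Proof.
rewrite Re_pow Im_pow.
by split; apply: signed_mem_Qcomb; [apply: signed_mem_cos_part | apply: signed_mem_isin_part].
Qed.

End RootOfMinusOne.

Local Open Scope complex_scope.

Lemma cis_exprn (R : realType) (a : R) (n : nat) :
  (cos a +i* sin a) ^+ n = cos (n%:R * a) +i* sin (n%:R * a).
Proof.
elim: n => [|n IHn]; first by rewrite expr0 mul0r cos0 sin0.
rewrite exprS IHn -[n.+1]addn1 natrD mulrDl mul1r addrC cosD sinD.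
by rewrite [sin a * _ + _]addrC.
Qed.

Lemma omega_half (R : realType) (j : nat) : omega R (2 ^ j.+1) ^+ (2 ^ j) = -1.
Proof.
rewrite /omega cis_exprn.
have -> : (2 ^ j)%N%:R * (2 * pi / (2 ^ j.+1)%N%:R) = pi :> R.
  by rewrite expnS natrM; field; rewrite pnatr_eq0 expn_eq0.
by rewrite cospi sinpi; apply/eqP; rewrite eq_complex /= oppr0 !eqxx.
Qed.

Lemma omega_conj (R : realType) (n : nat) : (omega R n)^* = (omega R n)^-1.
Proof.
have norm1 : omega R n * (omega R n)^* = 1.
  by rewrite -normCK normc_def /= cos2Dsin2 sqrtr1 expr1n.
have w0 : omega R n != 0 by apply: contra_eq_neq norm1 => ->; rewrite mul0r eq_sym oner_eq0.
by rewrite -[RHS]mulr1 -norm1 mulKf.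
Qed.

Theorem lemma8 (R : realType) (k : nat) : (1 <= k)%N ->
  let w := omega R (2 ^ k) in
  let s := basis_seq R k in
  is_Qbasis (Qadjoin w) s /\
  (forall t : int,
     (exists c : 'I_(size s) -> rat,
        (forall j, c j \in [:: -1; 0; 1]) /\ 'Re (w ^ t) = Qcomb c) /\
     (exists c : 'I_(size s) -> rat,
        (forall j, c j \in [:: -1; 0; 1]) /\ 'i * 'Im (w ^ t) = Qcomb c)).
Proof.
case: k => [//|j] _ /=.
split; first exact: (re_im_basis_Qbasis (omega_half R j) (omega_conj R _)).
exact: (re_im_coords (omega_half R j) (omega_conj R _)).
Qed.
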